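(* Let $q \geq 4$ be a prime power and let $\mathcal{E} = \{ \widetilde{E}(u) : u \in \mathcal{D}_q \}$. Then \[ \theta(\mathcal{E}) = \begin{cases} 2(q-1) & \text{if } q-1 \not\equiv 0 \pmod 3,\\ 0 & \text{if } q-1 \equiv 0 \pmod 3. \end{cases} \] Equivalently, $\min\{ |\widetilde{E}(u) \cap \widetilde{E}(v)| : u,v \in \mathcal{D}_q\}$ equals $2(q-1)$ if $3 \nmid q-1$ and equals $0$ if $3 \mid q-1$.
   Context: $\mathbb{F}_q$ is the finite field with $q$ elements. For $u=(u_1,u_2,u_3), v=(v_1,v_2,v_3) \in \mathbb{F}_q^3$ the Hamming distance is $d(u,v)=|\{i : u_i \neq v_i\}|$, and $B(u)=\{v \in \mathbb{F}_q^3 : d(u,v)\le 1\}$. The extended ball of $u$ is $E(u)=\bigcup_{\lambda \in \mathbb{F}_q} B(\lambda u)$. Let $\mathcal{D}_q=\{(u_1,u_2,u_3)\in\mathbb{F}_q^3 : u_1,u_2,u_3 \text{ pairwise distinct and nonzero}\}$ and $\widetilde{E}(u)=E(u)\cap \mathcal{D}_q$. A family $\mathcal{F}=\{A_1,\dots,A_m\}$ of sets is $t$-intersecting if $|A_i\cap A_j|\ge t$ for all $i\ne j$, and $\theta(\mathcal{F})=\max\{t : \mathcal{F} \text{ is } t\text{-intersecting}\}$ (i.e. the minimum of $|A_i\cap A_j|$ over pairs of members, here indexed by pairs $u,v\in\mathcal{D}_q$). *)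

From HB Require Import structures.
From mathcomp Require Import all_boot all_order all_algebra all_field.
Set Implicit Arguments. Unset Strict Implicit. Unset Printing Implicit Defensive.
Import GRing.Theory.
Local Open Scope ring_scope.

Definition vec3 (F : finFieldType) := {ffun 'I_3 -> F}.

Definition hdist (F : finFieldType) (u v : vec3 F) : nat :=
  #|[set i : 'I_3 | u i != v i]|.

Definition ball1 (F : finFieldType) (u : vec3 F) : {set vec3 F} :=
  [set v : vec3 F | (hdist u v <= 1)%N].

Definition scalev (F : finFieldType) (l : F) (u : vec3 F) : vec3 F :=
  [ffun i => l * u i].

Definition extball (F : finFieldType) (u : vec3 F) : {set vec3 F} :=
  \bigcup_(l : F) ball1 (scalev l u).

Definition Dq (F : finFieldType) : {set vec3 F} :=
  [set u : vec3 F | [forall i, u i != 0] &&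
                    [forall i, forall j, (i != j) ==> (u i != u j)]].

Definition extballD (F : finFieldType) (u : vec3 F) : {set vec3 F} :=
  extball u :&: Dq F.

From HB Require Import structures.
From mathcomp Require Import all_boot all_order all_algebra all_field all_fingroup all_solvable.
From mathcomp Require Import ring.
Set Implicit Arguments. Unset Strict Implicit. Unset Printing Implicit Defensive.
Import GRing.Theory.
Local Open Scope ring_scope.

(* Coordinatewise, w lies in E(u) iff some 2x2 minor of (w, u) vanishes, i.e. w agrees
   with a multiple of u on two coordinates; the common part of two extended balls is
   therefore a union of punctured lines {l a | l <> 0}, each of size q - 1.  For u, v in
   D_q, the point agreeing with u on coordinates {1, 2} and with v on {0, 2}, and its
   images under rotating the coordinates, are common points as soon as the matching
   products in the cyclic triple (u1 v2, u2 v0, u0 v1) differ.  When 3 does not divide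
   q - 1, cubing is injective, so this triple and its counterpart for (v, u) cannot both
   be constant; this yields two common points on distinct lines (or v is a multiple of u,
   and E(u) itself contains two such lines), whence at least 2(q - 1) common points,
   attained at u = (r, 1, r^2), v = (1, r, r^2).  When 3 divides q - 1, a primitive cube
   root w makes both triples constant for u = (1, w, w^2), v = (w, 1, w^2), and these
   extended balls meet D_q in disjoint sets. *)

Lemma exists_fresh (T : finType) (s : seq T) : (size s < #|T|)%N -> exists t, t \notin s.
Proof.
move=> lt_s_T; apply/existsP; apply: contraTT lt_s_T => /existsPn s_full.
rewrite -leqNgt; apply: leq_trans (card_size s); apply: subset_leq_card.
by apply/subsetP => x _; move: (s_full x); rewrite negbK.
Qed.

Lemma forall_perm (T : finType) (s : {perm T}) (P : pred T) :
  [forall i, P (s i)] = [forall i, P i].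
Proof. by apply/forallP/forallP => P_ i //; rewrite -(permKV s i); apply: P_. Qed.

Section ExtendedBalls.

Variable F : finFieldType.
Implicit Types (u v w x : vec3 F) (l c : F).

Local Notation meet u v := (extballD u :&: extballD v).

Definition i0 : 'I_3 := @Ordinal 3 0 isT.
Definition i1 : 'I_3 := @Ordinal 3 1 isT.
Definition i2 : 'I_3 := @Ordinal 3 2 isT.

Lemma ord3P (P : 'I_3 -> Prop) : P i0 -> P i1 -> P i2 -> forall i, P i.
Proof.
move=> P0 P1 P2 [[|[|[|n]]] lt_n3] //.
- by rewrite (_ : Ordinal _ = i0) //; apply: val_inj.
- by rewrite (_ : Ordinal _ = i1) //; apply: val_inj.
- by rewrite (_ : Ordinal _ = i2) //; apply: val_inj.
Qed.

Definition mk3 (a0 a1 a2 : F) : vec3 F :=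
  [ffun i => if i == i0 then a0 else if i == i1 then a1 else a2].

Lemma mk3E0 a0 a1 a2 : mk3 a0 a1 a2 i0 = a0. Proof. by rewrite ffunE. Qed.
Lemma mk3E1 a0 a1 a2 : mk3 a0 a1 a2 i1 = a1. Proof. by rewrite ffunE. Qed.
Lemma mk3E2 a0 a1 a2 : mk3 a0 a1 a2 i2 = a2. Proof. by rewrite ffunE. Qed.
Definition mk3E := (mk3E0, mk3E1, mk3E2).

Lemma vec3_eta x : x = mk3 (x i0) (x i1) (x i2).
Proof. by apply/ffunP; apply: ord3P; rewrite mk3E. Qed.

Lemma scalev_mk3 l a0 a1 a2 : scalev l (mk3 a0 a1 a2) = mk3 (l * a0) (l * a1) (l * a2).
Proof. by apply/ffunP; apply: ord3P; rewrite ffunE !mk3E. Qed.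

Lemma hdistE u w :
  hdist u w = ((u i0 != w i0) + (u i1 != w i1) + (u i2 != w i2))%N.
Proof.
rewrite /hdist -sum1_card big_mkcond /= !big_ord_recl big_ord0 /= !inE addn0 addnA.
have -> : lift ord0 (lift ord0 ord0) = i2 :> 'I_3 by apply: val_inj.
have -> : lift ord0 ord0 = i1 :> 'I_3 by apply: val_inj.
have -> : ord0 = i0 by apply: val_inj.
by do !case: (_ != _).
Qed.

Lemma DqE u : (u \in Dq F) = [&& u i0 != 0, u i1 != 0, u i2 != 0,
                                 u i0 != u i1, u i0 != u i2 & u i1 != u i2].
Proof.
rewrite inE; apply/andP/idP => [[/forallP nz /forallP inj] | ].
  have neq i j : i != j -> u i != u j by move: (inj i) => /forallP/(_ j)/implyP.
  by rewrite !nz !neq.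
case/and4P=> ? ? ? /and3P[? ? ?]; split; apply/forallP; apply: ord3P => //; apply/forallP;
  by apply: ord3P; rewrite //= eq_sym.
Qed.

Lemma Dq_mk3 a0 a1 a2 : (mk3 a0 a1 a2 \in Dq F) =
  [&& a0 != 0, a1 != 0, a2 != 0, a0 != a1, a0 != a2 & a1 != a2].
Proof. by rewrite DqE !mk3E. Qed.


Definition has_zero_minor w u : bool :=
  [|| w i0 * u i1 == w i1 * u i0, w i0 * u i2 == w i2 * u i0
    | w i1 * u i2 == w i2 * u i1].

Lemma has_zero_minor_mk3 a0 a1 a2 b0 b1 b2 :
  has_zero_minor (mk3 a0 a1 a2) (mk3 b0 b1 b2) =
  [|| a0 * b1 == a1 * b0, a0 * b2 == a2 * b0 | a1 * b2 == a2 * b1].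
Proof. by rewrite /has_zero_minor !mk3E. Qed.

Lemma scalevE l u i : scalev l u i = l * u i.
Proof. by rewrite ffunE. Qed.

(* [w] lies within distance 1 of [l u] iff it agrees with [l u] on two coordinates,
   and the multiple of [u] through two coordinates of [w] exists iff their minor vanishes. *)
Lemma mem_extball u w : u \in Dq F -> (w \in extball u) = has_zero_minor w u.
Proof.
rewrite DqE => /and4P[u0 u1 u2 _]; apply/bigcupP/idP.
- case=> l _; rewrite inE hdistE !scalevE /has_zero_minor.
  have minor i j : l * u i = w i -> l * u j = w j -> w i * u j == w j * u i.
    by move=> <- <-; rewrite mulrAC.
  case: (eqVneq (l * u i0) (w i0)) => E0; case: (eqVneq (l * u i1) (w i1)) => E1;
    case: (eqVneq (l * u i2) (w i2)) => E2 //= _.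
  + by rewrite (minor _ _ E0 E1).
  + by rewrite (minor _ _ E0 E1).
  + by rewrite (minor _ _ E0 E2) /= orbT.
  + by rewrite (minor _ _ E1 E2) !orbT.
- have agree i j : u i != 0 -> w i * u j = w j * u i -> w i / u i * u j = w j.
    by move=> ui e; rewrite mulrAC e mulfK.
  case/or3P => /eqP e.
  + exists (w i0 / u i0) => //.
    by rewrite inE hdistE !scalevE divfK // agree // !eqxx; case: (_ != _).
  + exists (w i0 / u i0) => //.
    by rewrite inE hdistE !scalevE divfK // (agree i0 i2) // !eqxx addn0; case: (_ != _).
  + exists (w i1 / u i1) => //.
    by rewrite inE hdistE !scalevE divfK // (agree i1 i2) // !eqxx; case: (_ != _).
Qed.

Lemma mem_extballD u w :
  u \in Dq F -> (w \in extballD u) = (w \in Dq F) && has_zero_minor w u.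
Proof. by move=> uD; rewrite inE mem_extball // andbC. Qed.

Lemma Dq_scalev l u : l != 0 -> (scalev l u \in Dq F) = (u \in Dq F).
Proof.
by move=> l0; rewrite !DqE !scalevE !mulf_eq0 (negPf l0) !(inj_eq (mulfI l0)).
Qed.

Lemma scalevA l c u : scalev l (scalev c u) = scalev (l * c) u.
Proof. by apply/ffunP => i; rewrite !scalevE mulrA. Qed.

Lemma hdist_scalev l u w : l != 0 -> hdist (scalev l u) (scalev l w) = hdist u w.
Proof. by move=> l0; apply: eq_card => i; rewrite !inE !scalevE (inj_eq (mulfI l0)). Qed.

Lemma extball_scalev c u : c != 0 -> extball (scalev c u) = extball u.
Proof.
move=> c0; apply/setP => w; apply/bigcupP/bigcupP => -[l _ wB].
  by exists (l * c) => //; rewrite -scalevA.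
by exists (l / c) => //; rewrite scalevA divfK.
Qed.

Lemma mem_extball_scalev l u w :
  l != 0 -> (scalev l w \in extball u) = (w \in extball u).
Proof.
move=> l0; rewrite -{1}(extball_scalev u l0).
by apply/bigcupP/bigcupP => -[m _ wB]; exists m => //; move: wB;
  rewrite !inE scalevA mulrC -scalevA hdist_scalev.
Qed.

Lemma mem_meet_scalev l u v w :
  l != 0 -> (scalev l w \in meet u v) = (w \in meet u v).
Proof. by move=> l0; rewrite !in_setI !mem_extball_scalev // Dq_scalev. Qed.

Definition line (a : vec3 F) : {set vec3 F} := [set scalev l a | l in [set~ 0]].

Definition proportional (a b : vec3 F) : bool := [exists l, b == scalev l a].

Lemma card_line (a : vec3 F) : a i0 != 0 -> #|line a| = #|F|.-1.
Proof.
move=> a0; rewrite card_in_imset ?cardsC1 // => l m _ _ /ffunP/(_ i0).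
by rewrite !scalevE => /(mulIf a0).
Qed.

Lemma card_lineU (a b : vec3 F) : a i0 != 0 -> b i0 != 0 -> ~~ proportional a b ->
  #|line a :|: line b| = (2 * #|F|.-1)%N.
Proof.
move=> a0 b0 /existsPn not_prop; rewrite cardsU !card_line // mul2n -addnn.
suff -> : line a :&: line b = set0 by rewrite cards0 subn0.
apply/setP => w; rewrite !inE; apply/negP => /andP[/imsetP[l _ ->] /imsetP[m]].
rewrite !inE => m0 /ffunP lmE; move/negP: (not_prop (m^-1 * l)); apply.
apply/eqP/ffunP => i; move: (lmE i); rewrite !scalevE -mulrA => ->.
by rewrite mulKf.
Qed.

Lemma two_lines_le_meet u v (a b : vec3 F) :
  a \in meet u v -> b \in meet u v -> ~~ proportional a b ->
  (2 * #|F|.-1 <= #|meet u v|)%N.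
Proof.
move=> a_uv b_uv not_ab.
have nz0 x : x \in meet u v -> x i0 != 0.
  by case/setIP=> /setIP[_]; rewrite DqE => /andP[].
rewrite -(card_lineU (nz0 a a_uv) (nz0 b b_uv) not_ab); apply: subset_leq_card.
rewrite subUset; apply/andP; split; apply/subsetP => w /imsetP[l];
  by rewrite in_setC1 => l0 ->; rewrite mem_meet_scalev.
Qed.

Definition permv (s : {perm 'I_3}) x : vec3 F := [ffun i => x (s i)].

Lemma permvK s : cancel (permv s) (permv s^-1).
Proof. by move=> x; apply/ffunP => i; rewrite !ffunE permKV. Qed.

Lemma permvKV s : cancel (permv s^-1) (permv s).
Proof. by move=> x; apply/ffunP => i; rewrite !ffunE permK. Qed.

Lemma hdist_permv s u w : hdist (permv s u) (permv s w) = hdist u w.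
Proof.
rewrite /hdist -[RHS](card_preimset _ (@perm_inj _ s)).
by apply: eq_card => i; rewrite !inE !ffunE.
Qed.

Lemma scalev_permv s l u : scalev l (permv s u) = permv s (scalev l u).
Proof. by apply/ffunP => i; rewrite !ffunE. Qed.

Lemma Dq_permv s u : (permv s u \in Dq F) = (u \in Dq F).
Proof.
rewrite !inE; congr (_ && _).
  by rewrite -[RHS](forall_perm s); apply: eq_forallb => i; rewrite ffunE.
rewrite -[RHS](forall_perm s); apply: eq_forallb => i.
rewrite -[RHS](forall_perm s); apply: eq_forallb => j.
by rewrite !ffunE (inj_eq perm_inj).
Qed.

Lemma mem_extball_permv s u w :
  (permv s w \in extball (permv s u)) = (w \in extball u).
Proof.
by apply/bigcupP/bigcupP => -[l _ wB]; exists l => //; move: wB;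
  rewrite !inE scalev_permv hdist_permv.
Qed.

Lemma mem_meet_permv s u v w :
  (permv s w \in meet (permv s u) (permv s v)) = (w \in meet u v).
Proof. by rewrite !in_setI !Dq_permv !mem_extball_permv. Qed.

Lemma card_meet_permv s u v : #|meet (permv s u) (permv s v)| = #|meet u v|.
Proof.
rewrite -[RHS](card_imset _ (can_inj (permvK s))) (can2_imset_pre _ (permvK s) (permvKV s)).
by apply: eq_card => x; rewrite -{1}(permvKV s x) [in RHS]in_set mem_meet_permv.
Qed.

Definition rot3 : {perm 'I_3} := perm (@ordS_inj 3).

Lemma rot3E0 x : permv rot3 x i0 = x i1.
Proof. by rewrite ffunE permE (_ : ordS i0 = i1) //; apply: val_inj. Qed.
Lemma rot3E1 x : permv rot3 x i1 = x i2.
Proof. by rewrite ffunE permE (_ : ordS i1 = i2) //; apply: val_inj. Qed.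
Lemma rot3E2 x : permv rot3 x i2 = x i0.
Proof. by rewrite ffunE permE (_ : ordS i2 = i0) //; apply: val_inj. Qed.
Definition rot3E := (rot3E0, rot3E1, rot3E2).

Hypothesis F_gt4 : (4 < #|F|)%N.

(* [u] and [u] with its last coordinate replaced span two distinct lines of [extballD u]. *)
Lemma extballD_card_ge u : u \in Dq F -> (2 * #|F|.-1 <= #|extballD u|)%N.
Proof.
move=> uD; have [t] := @exists_fresh _ [:: 0; u i0; u i1; u i2] F_gt4.
rewrite !inE !negb_or => /and4P[t0 tu0 tu1 tu2].
have := uD; rewrite DqE => /and4P[u0 u1 _ /andP[u01 _]].
rewrite -[extballD u]setIid.
apply: (@two_lines_le_meet u u u (mk3 (u i0) (u i1) t)).
- by rewrite setIid mem_extballD // uD /has_zero_minor mulrC eqxx.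
- rewrite setIid mem_extballD // Dq_mk3 u0 u1 u01 t0 !(eq_sym (u _) t) tu0 tu1.
  by rewrite /has_zero_minor !mk3E mulrC eqxx.
apply/existsP => -[l /eqP/ffunP lE]; move: (lE i0) (lE i2); rewrite !mk3E !scalevE.
move=> e0 e2; have l1 : l = 1 by apply: (mulIf u0); rewrite mul1r -e0.
by move: tu2; rewrite e2 l1 mul1r eqxx.
Qed.

Lemma meet_self_scalev c u : c != 0 -> meet u (scalev c u) = extballD u.
Proof. by move=> c0; rewrite /extballD extball_scalev // setIid. Qed.

(* Up to scaling, the point agreeing with [u] on coordinates 1, 2 and with [v] on 0, 2. *)
Definition meet_pt u v : vec3 F := mk3 (v i0 * u i2) (u i1 * v i2) (u i2 * v i2).

Lemma meet_pt_in_meet u v : u \in Dq F -> v \in Dq F ->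
  u i1 * v i2 != u i2 * v i0 -> meet_pt u v \in meet u v.
Proof.
move=> uD vD uv; have := uD; have := vD; rewrite !DqE.
move=> /and4P[v0 _ v2 /and3P[_ v02 _]] /and4P[_ u1 u2 /and3P[_ _ u12]].
rewrite in_setI !mem_extballD // Dq_mk3 /has_zero_minor !mk3E !mulf_neq0 //=.
rewrite [v i0 * _]mulrC eq_sym uv (inj_eq (mulfI u2)) v02 (inj_eq (mulIf v2)) u12 /=.
have -> : u i1 * v i2 * u i2 == u i2 * v i2 * u i1 by apply/eqP; ring.
have -> : u i2 * v i0 * v i2 == u i2 * v i2 * v i0 by apply/eqP; ring.
by rewrite !orbT.
Qed.

Lemma proportional_meet_pt u v : u \in Dq F -> v \in Dq F ->
  proportional (permv rot3 (meet_pt u v)) (meet_pt (permv rot3 u) (permv rot3 v)) ->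
  v = scalev (v i2 / u i2) u.
Proof.
rewrite !DqE => /and4P[u0 _ u2 _] /and4P[v0 _ _ _] /existsP[l /eqP/ffunP lE].
move: (lE i0) (lE i1) (lE i2); rewrite !scalevE !rot3E !mk3E !rot3E.
move=> e0; rewrite mulrCA => /(mulfI u2) v0E; rewrite mulrC mulrCA => /(mulfI v0) u0E.
have l0 : l != 0 by apply: contra_neq u0 => l0; rewrite u0E l0 !mul0r.
apply/ffunP; apply: ord3P; rewrite scalevE.
- by rewrite u0E v0E; field; rewrite u2.
- apply: (mulfI (mulf_neq0 l0 u2)); move: e0; rewrite u0E => e0.
  by rewrite [LHS]mulrC e0; field; rewrite u2.
- by rewrite divfK.
Qed.

Lemma meet_le_of_cyclic u v : u \in Dq F -> v \in Dq F ->
  u i1 * v i2 != u i2 * v i0 -> u i2 * v i0 != u i0 * v i1 ->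
  (2 * #|F|.-1 <= #|meet u v|)%N.
Proof.
move=> uD vD ab bc; rewrite -(card_meet_permv rot3).
set a := permv rot3 (meet_pt u v); set b := meet_pt (permv rot3 u) (permv rot3 v).
have a_in : a \in meet (permv rot3 u) (permv rot3 v).
  by rewrite mem_meet_permv meet_pt_in_meet.
have b_in : b \in meet (permv rot3 u) (permv rot3 v).
  by apply: meet_pt_in_meet; rewrite ?Dq_permv // !rot3E.
have [/(proportional_meet_pt uD vD) vE | ] := boolP (proportional a b).
  have c0 : v i2 / u i2 != 0.
    by move: vD uD; rewrite !DqE => /and3P[_ _ /andP[v2 _]] /and3P[_ _ /andP[u2 _]];
      rewrite mulf_neq0 ?invr_eq0.
  by rewrite card_meet_permv vE meet_self_scalev // extballD_card_ge.
exact: two_lines_le_meet a_in b_in.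
Qed.

Definition const_cyclic_products u v : bool :=
  [&& u i1 * v i2 == u i2 * v i0 & u i2 * v i0 == u i0 * v i1].

Lemma meet_le_of_not_const u v : u \in Dq F -> v \in Dq F -> ~~ const_cyclic_products u v ->
  (2 * #|F|.-1 <= #|meet u v|)%N.
Proof.
move=> uD vD; have rD x : x \in Dq F -> permv rot3 x \in Dq F by rewrite Dq_permv.
rewrite /const_cyclic_products.
have [ab | ab] := eqVneq (u i1 * v i2); have [bc | bc] := eqVneq (u i2 * v i0) => //= _.
- rewrite -(card_meet_permv rot3); apply: meet_le_of_cyclic; rewrite ?rD // !rot3E //.
  by rewrite ab eq_sym.
- rewrite -2!(card_meet_permv rot3); apply: meet_le_of_cyclic; rewrite ?rD // !rot3E //.
  by rewrite -bc eq_sym.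
- exact: meet_le_of_cyclic.
Qed.

Lemma expf3_inj : (#|F|.-1 %% 3 != 0)%N -> forall x y : F, x ^+ 3 = y ^+ 3 -> x = y.
Proof.
move=> q3 x y; have [-> | y0] := eqVneq y 0 => xy3.
  by move/eqP: xy3; rewrite expr0n expf_eq0 /= => /eqP.
suff: x / y = 1 by move/(canRL (divfK y0)); rewrite mul1r.
set r := x / y.
have r3 : r ^+ 3 = 1 by rewrite expr_div_n xy3 divff // expf_neq0.
have r0 : r != 0 by apply: contra_eq_neq r3 => ->; rewrite expr0n eq_sym oner_eq0.
have rq : r ^+ #|F|.-1 = 1.
  apply: (mulIf r0); rewrite mul1r -exprSr prednK ?expf_card //.
  by apply/card_gt0P; exists 0.
move: rq q3; rewrite -(expr_mod _ r3).
have : (#|F|.-1 %% 3 < 3)%N by rewrite ltn_mod.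
case: (#|F|.-1 %% 3)%N => [|[|[|]]] // _ r2 _.
by rewrite -r3 exprS r2 mulr1.
Qed.

(* If both cyclic triples of products were constant, their cubes would both equal
   the product of all six coordinates, forcing the constants to agree. *)
Lemma meet_le (q3 : (#|F|.-1 %% 3 != 0)%N) u v : u \in Dq F -> v \in Dq F ->
  (2 * #|F|.-1 <= #|meet u v|)%N.
Proof.
move=> uD vD.
have [/andP[/eqP ab /eqP bc] | ] := boolP (const_cyclic_products u v);
  last exact: meet_le_of_not_const.
have [/andP[/eqP ab' /eqP bc'] | ] := boolP (const_cyclic_products v u);
  last by rewrite setIC; apply: meet_le_of_not_const.
have ab_ab' : u i1 * v i2 = v i1 * u i2.
  apply: (expf3_inj q3).
  transitivity ((u i1 * v i2) * (u i2 * v i0) * (u i0 * v i1)); first by rewrite -bc -ab; ring.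
  transitivity ((v i1 * u i2) * (v i2 * u i0) * (v i0 * u i1)); first by ring.
  by rewrite -bc' -ab'; ring.
move: uD vD; rewrite !DqE => /and4P[u0 _ _ _] /and4P[_ _ _ /and3P[_ _ /eqP[]]].
by apply: (mulfI u0); rewrite -bc -ab ab_ab' ab' mulrC.
Qed.

Lemma exists_cube_root1 : (#|F|.-1 %% 3 == 0)%N -> exists2 w : F, w ^+ 3 = 1 & w != 1.
Proof.
move=> q3; have d3 : (3 %| #|[set: {unit F}]|)%N by rewrite card_finField_unit /dvdn.
have [x _ ox] := Cauchy (isT : prime 3) d3.
exists (val x); first by rewrite -FinRing.val_unitX -ox expg_order.
apply: contra_eq_neq ox => x1; rewrite (_ : x = 1%g) ?order1 //; exact: val_inj.
Qed.

(* Below, a vanishing minor for [u] and one for [v] are two linear equations in the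
   coordinates of [x]; in each of the nine cases a suitable linear combination of them
   either equates two coordinates of [x] (or contradicts the choice of [w], [r]) or
   puts [x] on one of the two lines. *)
Lemma eq_of_lincomb (a b x y p q s t : F) :
  p = q -> s = t -> x - y = a * (p - q) + b * (s - t) -> x = y.
Proof. by move=> -> -> /eqP; rewrite !subrr !mulr0 addr0 subr_eq0 => /eqP. Qed.

Lemma meet_cube_roots (w : F) : w ^+ 3 = 1 -> w != 1 ->
  [/\ mk3 1 w (w * w) \in Dq F, mk3 w 1 (w * w) \in Dq F &
      meet (mk3 1 w (w * w)) (mk3 w 1 (w * w)) = set0].
Proof.
move=> w3 w1; have w0 : w != 0 by apply: contra_eq_neq w3 => ->; rewrite expr0n eq_sym oner_eq0.
have www : w * w * w = 1 by rewrite -w3 !exprS expr0 mulr1 mulrA.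
have ww1 : w * w != 1 by apply: contra_neq w1 => e; rewrite -www e mul1r.
have ww_w : w * w != w by apply: contra_neq w1 => e; apply: (mulfI w0); rewrite mulr1.
have ww0 : w * w != 0 by rewrite mulf_neq0.
have uD : mk3 1 w (w * w) \in Dq F by rewrite Dq_mk3 oner_eq0 w0 ww0 !(eq_sym 1) w1 ww1 eq_sym ww_w.
have vD : mk3 w 1 (w * w) \in Dq F by rewrite Dq_mk3 oner_eq0 w0 ww0 w1 eq_sym ww_w eq_sym ww1.
split=> //; apply/setP => x; rewrite in_set0; apply/negbTE.
rewrite (vec3_eta x) in_setI !mem_extballD //.
move: (x i0) (x i1) (x i2) => x0 x1 x2.
rewrite Dq_mk3 !has_zero_minor_mk3 ?mulr1 ?mul1r.
apply/negP => /and3P[/andP[/and4P[x0n _ x2n /and3P[x01 x02 x12]] U] _ V].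
case/or3P: U => /eqP U; case/or3P: V => /eqP V.
- by move/eqP: ww1; apply; apply: (mulfI x0n); rewrite mulr1;
  apply: (eq_of_lincomb (a:=w) (b:=-1) U V); ring.
- by move/eqP: x12; apply; apply: (mulIf w0); apply: (eq_of_lincomb (a:=-w) (b:=1) U V); ring.
- move/eqP: x02; apply; rewrite -[x0]mulr1 -www; symmetry;
  apply: (eq_of_lincomb (a:=-(w*w)) (b:=-1) U V); ring.
- move/eqP: x12; apply; rewrite -[x1]mulr1 -www; symmetry;
  apply: (eq_of_lincomb (a:=-1) (b:=w*w) U V); ring.
- by move/eqP: w1; apply; apply: (mulfI x2n); rewrite mulr1;
  apply: (eq_of_lincomb (a:=1) (b:=-1) U V); ring.
- by move/eqP: x01; apply; apply: (mulIf ww0); apply: (eq_of_lincomb (a:=1) (b:=-1) U V); ring.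
- by move/eqP: x02; apply; apply: (mulIf w0); apply: (eq_of_lincomb (a:=1) (b:=w) U V); ring.
- by move/eqP: x01; apply; apply: (mulIf ww0); symmetry;
  apply: (eq_of_lincomb (a:=1) (b:=-1) U V); ring.
- by move/eqP: w1; apply; apply: (mulfI x2n); rewrite mulr1;
  apply: (eq_of_lincomb (a:=-1) (b:=1) U V); ring.
Qed.

Lemma meet_sub_two_lines (r : F) : r != 0 -> r * r != 1 ->
  [/\ mk3 r 1 (r * r) \in Dq F, mk3 1 r (r * r) \in Dq F &
      meet (mk3 r 1 (r * r)) (mk3 1 r (r * r)) \subset
      line (mk3 1 r (r * r * r)) :|: line (mk3 r 1 (r * r * r))].
Proof.
move=> r0 rr1; have r1 : r != 1 by apply: contra_neq rr1 => ->; rewrite mulr1.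
have rr_r : r * r != r by apply: contra_neq r1 => e; apply: (mulfI r0); rewrite mulr1.
have rr0 : r * r != 0 by rewrite mulf_neq0.
have uD : mk3 r 1 (r * r) \in Dq F by rewrite Dq_mk3 r0 oner_eq0 rr0 r1 eq_sym rr_r eq_sym rr1.
have vD : mk3 1 r (r * r) \in Dq F.
  by rewrite Dq_mk3 r0 oner_eq0 rr0 eq_sym r1 eq_sym rr1 eq_sym rr_r.
split=> //; apply/subsetP => x; rewrite (vec3_eta x) in_setI !mem_extballD //.
move: (x i0) (x i1) (x i2) => x0 x1 x2.
rewrite Dq_mk3 !has_zero_minor_mk3 ?mulr1 ?mul1r.
move=> /and3P[/andP[/and4P[x0n x1n x2n /and3P[x01 x02 x12]] U] _ V].
have on_line l (a0 a1 a2 : F) : l != 0 -> mk3 x0 x1 x2 = mk3 (l * a0) (l * a1) (l * a2) ->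
    mk3 x0 x1 x2 \in line (mk3 a0 a1 a2).
  by move=> l0 ->; rewrite -scalev_mk3; apply/imsetP; exists l; rewrite ?in_setC1.
case/or3P: U => /eqP U; case/or3P: V => /eqP V.
- exfalso; move/eqP: rr1; apply; apply: (mulfI x1n); rewrite mulr1;
  apply: (eq_of_lincomb (a:=-r) (b:=1) U V); ring.
- apply/setUP; right; apply: (on_line x1) => //; rewrite mulr1; congr mk3 => //.
  by apply: (eq_of_lincomb (a:=r*r) (b:=-1) U V); ring.
- exfalso; move/eqP: x02; apply; apply: (mulIf r0); apply: (eq_of_lincomb (a:=r) (b:=1) U V); ring.
- exfalso; move/eqP: x12; apply; apply: (mulIf r0); apply: (eq_of_lincomb (a:=1) (b:=-r) U V); ring.
- exfalso; move/eqP: r1; apply; apply: (mulfI x2n); rewrite mulr1;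
  apply: (eq_of_lincomb (a:=-1) (b:=1) U V); ring.
- exfalso; move/eqP: x01; apply; apply: (mulIf rr0);
  apply: (eq_of_lincomb (a:=1) (b:=-1) U V); ring.
- apply/setUP; left; apply: (on_line x0) => //; rewrite mulr1; congr mk3 => //.
  by apply: (eq_of_lincomb (a:=-1) (b:=-(r*r)) U V); ring.
- exfalso; move/eqP: x01; apply; apply: (mulIf rr0); symmetry;
  apply: (eq_of_lincomb (a:=1) (b:=-1) U V); ring.
- exfalso; move/eqP: r1; apply; apply: (mulfI x2n); rewrite mulr1;
  apply: (eq_of_lincomb (a:=1) (b:=-1) U V); ring.
Qed.

End ExtendedBalls.

Theorem theorem1 (F : finFieldType) (Hq : (4 <= #|F|)%N) :
  let t := if (#|F|.-1 %% 3 == 0)%N then 0%N else (2 * #|F|.-1)%N in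
  (forall u v : vec3 F, u \in Dq F -> v \in Dq F ->
     (t <= #|extballD u :&: extballD v|)%N) /\
  (exists u v : vec3 F, [/\ u \in Dq F, v \in Dq F &
     #|extballD u :&: extballD v| = t]).
Proof.
rewrite /=; case: ifP => [q3 | /negbT q3].
  have [w w3 w1] := exists_cube_root1 q3.
  have [uD vD meet0] := meet_cube_roots w3 w1.
  by split=> // ; exists (mk3 1 w (w * w)), (mk3 w 1 (w * w)); rewrite meet0 cards0.
have F_gt4 : (4 < #|F|)%N by rewrite ltn_neqAle Hq andbT; apply: contra_neq q3 => <-.
split=> [u v uD vD | ]; first exact: meet_le.
have [r] := @exists_fresh F [:: 0; 1; -1] (leq_trans (isT : 3 < 4)%N Hq).
rewrite !inE !negb_or => /and3P[r0 r1 rN1].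
have rr1 : r * r != 1 by rewrite -expr2 sqrf_eq1 negb_or r1.
have [uD vD sub_lines] := meet_sub_two_lines r0 rr1.
exists (mk3 r 1 (r * r)), (mk3 1 r (r * r)); split=> //.
apply/eqP; rewrite eqn_leq meet_le // andbT.
apply: leq_trans (subset_leq_card sub_lines) (leq_trans (leq_card_setU _ _) _).
by rewrite !card_line ?mk3E ?oner_eq0 // mul2n addnn.
Qed.
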